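(* Let $M\ge2$ be an integer, $\phi\in\mathbb{R}$, and let $\varphi$ be a random variable on $[0,2\pi)$ with density $f(\varphi)=\frac{M}{2\pi}\frac{\mathrm{sinc}^2(\frac M2|\phi-\varphi|_{2\pi})}{\mathrm{sinc}^2(\frac12|\phi-\varphi|_{2\pi})}$. Then $\mathbb{E}[e^{i\varphi}]=\big(1-\frac1M\big)e^{i\phi}$ and $\mathbb{E}[\sin^2(\varphi-\phi)]=\frac1M$. Consequently $\big(1+\frac{1}{M-1}\big)e^{i\varphi}$ is an unbiased estimator of $e^{i\phi}$ with variance $\Theta(1/M)$.
   Context: $|x|_{2\pi}:=\min\{|x-2\pi\ell|:\ell\in\mathbb{Z}\}$; $\mathrm{sinc}(x)=\sin(x)/x$ for $x\neq0$, $\mathrm{sinc}(0)=1$. This density is exactly the output distribution of the randomized phase estimation procedure: sample $u\sim\mathrm{Unif}[0,1)$, apply the phases $e^{-2\pi i u k/M}$ to $\frac1{\sqrt M}\sum_{k<M}e^{i\phi k}\ket k$, apply the inverse Fourier transform over $\mathbb{Z}_M$, measure $j$, output $\frac{2\pi}{M}(j+u)$. *)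

From Stdlib Require Import Reals ZArith.
From Coquelicot Require Import Coquelicot.
Open Scope R_scope.

(* |x|_{2pi} := min { |x - 2 pi l| : l in Z } (taken as the infimum, which is attained). *)
Definition dist2pi (x : R) : R :=
  real (Glb_Rbar (fun d => exists l : Z, d = Rabs (x - 2 * PI * IZR l))).

Definition sinc (x : R) : R := if Req_EM_T x 0 then 1 else sin x / x.

Definition qpe_density (M : nat) (phi v : R) : R :=
  INR M / (2 * PI) *
  ((sinc (INR M / 2 * dist2pi (phi - v))) ^ 2 / (sinc (/ 2 * dist2pi (phi - v))) ^ 2).

Definition cexpi (t : R) : C := (cos t, sin t).

Definition Expect (M : nat) (phi : R) (g : R -> R) : R :=
  RInt (fun v => qpe_density M phi v * g v) 0 (2 * PI).

Definition CExpect (M : nat) (phi : R) (g : R -> C) : C :=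
  (Expect M phi (fun v => Re (g v)), Expect M phi (fun v => Im (g v))).

Definition estimator (M : nat) (v : R) : C :=
  Cmult (RtoC (1 + / (INR M - 1))) (cexpi v).

Definition CVariance (M : nat) (phi : R) (X : R -> C) : R :=
  Expect M phi (fun v => (Cmod (Cminus (X v) (CExpect M phi X))) ^ 2).

(* The density is the Fejér kernel F_M(t) = sin^2(M t/2) / sin^2(t/2) = sum_{|j|<M} (M - |j|) e^{ijt},
   normalised by 2 pi M.  Integrating it against cos(j v - psi) over one period therefore picks out
   the single Fourier coefficient (M - j)/M, so E[cos(j varphi - psi)] = (1 - j/M) cos(j phi - psi).
   With j = 1 this gives E[e^{i varphi}]; with j = 2, via sin^2 x = (1 - cos 2x)/2, it gives
   E[sin^2(varphi - phi)] = 1/M; and the variance of the estimator is (M/(M-1))^2 - 1 = Theta(1/M). *)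
From Stdlib Require Import Reals Lra Lia ZArith.
From Coquelicot Require Import Coquelicot.
Open Scope R_scope.
Local Arguments INR : simpl never.

Lemma sin_cos_period_Z (x : R) (z : Z) :
  sin (x + 2 * IZR z * PI) = sin x /\ cos (x + 2 * IZR z * PI) = cos x.
Proof.
  destruct z as [|p|p].
  - rewrite Rmult_0_r, Rmult_0_l, Rplus_0_r; auto.
  - replace (IZR (Z.pos p)) with (INR (Pos.to_nat p))
      by (rewrite INR_IZR_INZ, positive_nat_Z; reflexivity).
    split; [apply sin_period | apply cos_period].
  - replace (IZR (Z.neg p)) with (- INR (Pos.to_nat p))
      by (rewrite INR_IZR_INZ, positive_nat_Z, <- opp_IZR; reflexivity).
    set (y := x + 2 * - INR (Pos.to_nat p) * PI).
    rewrite <- (sin_period y (Pos.to_nat p)), <- (cos_period y (Pos.to_nat p)).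
    unfold y; split; f_equal; ring.
Qed.

Lemma is_RInt_const_R (c a b : R) : is_RInt (fun _ => c) a b ((b - a) * c).
Proof. exact (@is_RInt_const R_NormedModule a b c). Qed.

Lemma is_RInt_cos_Z_harmonic (m : Z) (c : R) :
  is_RInt (fun v => cos (c + IZR m * v)) 0 (2 * PI)
    (if Z.eq_dec m 0 then 2 * PI * cos c else 0).
Proof.
  destruct (Z.eq_dec m 0) as [->|Hm].
  - replace (2 * PI * cos c) with ((2 * PI - 0) * cos c) by ring.
    apply (is_RInt_ext (fun _ => cos c)); [|apply is_RInt_const_R].
    intros x _; rewrite Rmult_0_l, Rplus_0_r; reflexivity.
  - assert (Hm' : IZR m <> 0) by (apply not_0_IZR; auto).
    set (F v := sin (c + IZR m * v) / IZR m).
    replace 0 with (F (2 * PI) - F 0) at 2.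
    + apply (@is_RInt_derive R_CompleteNormedModule F).
      * intros x _. unfold F. auto_derive; auto. field; auto.
      * intros x _. apply (ex_derive_continuous (V := R_NormedModule)). auto_derive; auto.
    + unfold F. replace (c + IZR m * (2 * PI)) with (c + 2 * IZR m * PI) by ring.
      rewrite (proj1 (sin_cos_period_Z c m)), Rmult_0_r, Rplus_0_r. ring.
Qed.

(* Product-to-sum reduces this to two instances of [is_RInt_cos_Z_harmonic]. *)
Lemma is_RInt_cos_mul_cos (phi psi : R) (k j : nat) :
  is_RInt (fun v => cos (INR k * (phi - v)) * cos (INR j * v - psi)) 0 (2 * PI)
    (if Nat.eq_dec k j then
       (if Nat.eq_dec k 0 then 2 * PI * cos psi else PI * cos (INR k * phi - psi))
     else 0).
Proof.
  set (m1 := (Z.of_nat j - Z.of_nat k)%Z).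
  set (m2 := (- (Z.of_nat k + Z.of_nat j))%Z).
  assert (H := is_RInt_plus _ _ _ _ _ _
    (is_RInt_scal _ _ _ (/ 2) _ (is_RInt_cos_Z_harmonic m1 (INR k * phi - psi)))
    (is_RInt_scal _ _ _ (/ 2) _ (is_RInt_cos_Z_harmonic m2 (INR k * phi + psi)))).
  apply (is_RInt_ext _ (fun v => cos (INR k * (phi - v)) * cos (INR j * v - psi))) in H.
  2:{ intros x _. unfold plus, scal; simpl; unfold mult; simpl.
      unfold m1, m2. rewrite opp_IZR, minus_IZR, plus_IZR, <- !INR_IZR_INZ.
      replace (INR k * phi - psi + (INR j - INR k) * x) with
        (INR k * (phi - x) + (INR j * x - psi)) by ring.
      replace (INR k * phi + psi + - (INR k + INR j) * x) with
        (INR k * (phi - x) - (INR j * x - psi)) by ring.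
      rewrite (cos_plus (INR k * (phi - x))), (cos_minus (INR k * (phi - x))). field. }
  revert H. unfold plus, scal; simpl; unfold mult; simpl.
  destruct (Z.eq_dec m1 0), (Z.eq_dec m2 0), (Nat.eq_dec k j), (Nat.eq_dec k 0);
    unfold m1, m2 in *; try (exfalso; lia); intro H; subst.
  - rewrite Rmult_0_l, Rminus_0_l, Rplus_0_l, cos_neg in H.
    replace (2 * PI * cos psi) with (/ 2 * (2 * PI * cos psi) + / 2 * (2 * PI * cos psi))
      by field; exact H.
  - replace (PI * cos (INR j * phi - psi)) with (/ 2 * (2 * PI * cos (INR j * phi - psi)) + / 2 * 0)
      by field; exact H.
  - rewrite Rmult_0_r, Rplus_0_r in H; exact H.
  - rewrite Rmult_0_r, Rplus_0_r in H; exact H.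
Qed.

Fixpoint dirichlet (n : nat) (t : R) : R :=
  match n with O => 1 | S n' => dirichlet n' t + 2 * cos (INR n * t) end.

(* [fejer M] is M times the classical Fejér kernel: the sum of the Dirichlet kernels of order < M. *)
Fixpoint fejer (n : nat) (t : R) : R :=
  match n with O => 0 | S n' => fejer n' t + dirichlet n' t end.

Lemma is_RInt_dirichlet_mul_cos (phi psi : R) (n j : nat) :
  is_RInt (fun v => dirichlet n (phi - v) * cos (INR j * v - psi)) 0 (2 * PI)
    (if le_dec j n then 2 * PI * cos (INR j * phi - psi) else 0).
Proof.
  induction n as [|n IH].
  - assert (H := is_RInt_cos_mul_cos phi psi 0 j).
    apply (is_RInt_ext _ (fun v => dirichlet 0 (phi - v) * cos (INR j * v - psi))) in H.
    2:{ intros x _. simpl. rewrite Rmult_0_l, cos_0. reflexivity. }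
    revert H. destruct (Nat.eq_dec 0 j), (le_dec j 0); try (exfalso; lia); simpl; auto.
    subst. rewrite Rmult_0_l, Rminus_0_l, cos_neg; auto.
  - assert (H := is_RInt_plus _ _ _ _ _ _ IH
      (is_RInt_scal _ _ _ 2 _ (is_RInt_cos_mul_cos phi psi (S n) j))).
    destruct (le_dec j n), (Nat.eq_dec (S n) j), (Nat.eq_dec (S n) 0), (le_dec j (S n));
      try (exfalso; lia);
      apply (is_RInt_ext _ (fun v => dirichlet (S n) (phi - v) * cos (INR j * v - psi))) in H;
      try (intros x _; unfold plus, scal; simpl; unfold mult; simpl; ring);
      revert H; unfold plus, scal; simpl; unfold mult; simpl; intro H.
    + rewrite Rmult_0_r, Rplus_0_r in H; exact H.
    + subst. rewrite Rplus_0_l in H.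
      replace (2 * PI * cos (INR (S n) * phi - psi))
        with (2 * (PI * cos (INR (S n) * phi - psi))) by ring; exact H.
    + rewrite Rmult_0_r, Rplus_0_r in H; exact H.
Qed.

Lemma is_RInt_fejer_mul_cos (phi psi : R) (M j : nat) :
  is_RInt (fun v => fejer M (phi - v) * cos (INR j * v - psi)) 0 (2 * PI)
    (INR (M - j) * (2 * PI * cos (INR j * phi - psi))).
Proof.
  induction M as [|M IH].
  - simpl. rewrite Rmult_0_l.
    apply (is_RInt_ext (fun _ => 0)); [intros x _; rewrite Rmult_0_l; reflexivity|].
    replace 0 with ((2 * PI - 0) * 0) at 2 by ring; apply is_RInt_const_R.
  - assert (H := is_RInt_plus _ _ _ _ _ _ IH (is_RInt_dirichlet_mul_cos phi psi M j)).
    apply (is_RInt_ext _ (fun v => fejer (S M) (phi - v) * cos (INR j * v - psi))) in H.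
    2:{ intros x _. unfold plus; simpl. ring. }
    unfold plus in H; simpl in H.
    destruct (le_dec j M).
    + replace (S M - j)%nat with (S (M - j)) by lia. rewrite S_INR.
      replace ((INR (M - j) + 1) * (2 * PI * cos (INR j * phi - psi))) with
        (INR (M - j) * (2 * PI * cos (INR j * phi - psi)) + 2 * PI * cos (INR j * phi - psi))
        by ring; exact H.
    + replace (S M - j)%nat with 0%nat by lia. replace (M - j)%nat with 0%nat in H by lia.
      rewrite INR_0, Rmult_0_l in H |- *. rewrite Rplus_0_r in H. exact H.
Qed.

Lemma sin_half_mul_dirichlet (n : nat) (t : R) :
  sin (t / 2) * dirichlet n t = sin ((2 * INR n + 1) * t / 2).
Proof.
  induction n as [|n IH].
  - simpl. rewrite INR_0, Rmult_1_r. f_equal; field.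
  - simpl dirichlet. rewrite Rmult_plus_distr_l, IH.
    set (a := INR (S n) * t). set (b := t / 2).
    replace ((2 * INR (S n) + 1) * t / 2) with (a + b) by (unfold a, b; rewrite S_INR; field).
    replace ((2 * INR n + 1) * t / 2) with (a - b) by (unfold a, b; rewrite S_INR; field).
    rewrite sin_plus, sin_minus. ring.
Qed.

(* The inductive step is sin^2 u + sin w sin (2u + w) = sin^2 (u + w). *)
Lemma sin_half_sq_mul_fejer (M : nat) (t : R) :
  sin (t / 2) ^ 2 * fejer M t = sin (INR M * t / 2) ^ 2.
Proof.
  induction M as [|M IH].
  - simpl. rewrite INR_0. replace (0 * t / 2) with 0 by field. rewrite sin_0. ring.
  - simpl fejer. replace (sin (t / 2) ^ 2 * (fejer M t + dirichlet M t)) with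
      (sin (t / 2) ^ 2 * fejer M t + sin (t / 2) * (sin (t / 2) * dirichlet M t)) by ring.
    rewrite IH, sin_half_mul_dirichlet.
    set (u := INR M * t / 2). set (w := t / 2).
    replace (INR (S M) * t / 2) with (u + w) by (unfold u, w; rewrite S_INR; field).
    replace ((2 * INR M + 1) * t / 2) with (2 * u + w) by (unfold u, w; field).
    rewrite (sin_plus u w), (sin_plus (2 * u) w), sin_2a, cos_2a.
    assert (Hu := sin2_cos2 u). assert (Hw := sin2_cos2 w). unfold Rsqr in *.
    replace (cos w ^ 2) with (1 - sin w ^ 2) by (simpl; lra).
    replace (cos u ^ 2) with (1 - sin u ^ 2) by (simpl; lra).
    ring_simplify. simpl; nra.
Qed.

Lemma dist2pi_attained (x : R) :
  exists l : Z, dist2pi x = Rabs (x - 2 * PI * IZR l) /\ dist2pi x <= PI.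
Proof.
  assert (HPI := PI_RGT_0).
  set (l0 := (up (x / (2 * PI) + / 2) - 1)%Z).
  assert (Hl0 : x - PI < 2 * PI * IZR l0 <= x + PI).
  { destruct (archimed (x / (2 * PI) + / 2)) as [A1 A2].
    unfold l0; rewrite minus_IZR.
    replace x with (2 * PI * (x / (2 * PI))) at 1 4 by (field; lra).
    split; nra. }
  set (d0 := Rabs (x - 2 * PI * IZR l0)).
  assert (Hmin : forall l : Z, d0 <= Rabs (x - 2 * PI * IZR l)).
  { intro l. unfold d0. destruct (Z.eq_dec l l0) as [->|Hne]; [lra|].
    destruct (Z_lt_le_dec l l0) as [Hlt|Hle].
    - assert (IZR l <= IZR l0 - 1) by (rewrite <- minus_IZR; apply IZR_le; lia).
      rewrite (Rabs_right (x - 2 * PI * IZR l)) by nra. apply Rabs_le; nra.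
    - assert (IZR l0 + 1 <= IZR l) by (rewrite <- plus_IZR; apply IZR_le; lia).
      rewrite (Rabs_left1 (x - 2 * PI * IZR l)) by nra. apply Rabs_le; nra. }
  assert (Hglb : dist2pi x = d0).
  { unfold dist2pi. rewrite (is_glb_Rbar_unique _ (Finite d0)); [reflexivity|]. split.
    - intros z [l ->]. apply Hmin.
    - intros b Hb. apply Hb. exists l0. reflexivity. }
  exists l0. rewrite Hglb. split; [reflexivity|]. apply Rabs_le; lra.
Qed.

Lemma dirichlet_ext (n : nat) (s t : R) :
  (forall k, cos (INR k * s) = cos (INR k * t)) -> dirichlet n s = dirichlet n t.
Proof. intro H. induction n; simpl; [reflexivity|]. rewrite IHn, H. reflexivity. Qed.

Lemma fejer_ext (n : nat) (s t : R) :
  (forall k, cos (INR k * s) = cos (INR k * t)) -> fejer n s = fejer n t.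
Proof.
  intro H. induction n; simpl; [reflexivity|]. rewrite IHn, (dirichlet_ext n s t H). reflexivity.
Qed.

Lemma fejer_abs_sub_2PI_mult (n : nat) (x : R) (l : Z) :
  fejer n (Rabs (x - 2 * PI * IZR l)) = fejer n x.
Proof.
  apply fejer_ext. intro k.
  assert (Hshift : INR k * (x - 2 * PI * IZR l) = INR k * x + 2 * IZR (- (Z.of_nat k * l)) * PI)
    by (rewrite opp_IZR, mult_IZR, <- INR_IZR_INZ; ring).
  destruct (Rle_or_lt 0 (x - 2 * PI * IZR l)).
  - rewrite Rabs_right, Hshift by lra. apply sin_cos_period_Z.
  - rewrite Rabs_left, Ropp_mult_distr_r_reverse, cos_neg, Hshift by lra.
    apply sin_cos_period_Z.
Qed.

Lemma fejer_0 (M : nat) : fejer M 0 = INR M ^ 2.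
Proof.
  assert (Hdirichlet : forall n, dirichlet n 0 = 2 * INR n + 1).
  { induction n; simpl dirichlet; [rewrite INR_0; ring|].
    rewrite IHn, Rmult_0_r, cos_0, S_INR; ring. }
  induction M; simpl fejer; [rewrite INR_0; ring|].
  rewrite IHM, Hdirichlet, S_INR; ring.
Qed.

(* At [d = 0] both sides are [1], because [sinc 0 = 1] and [fejer M 0 = M^2]. *)
Lemma sinc_ratio_sq_fejer (M : nat) (d : R) : (1 <= M)%nat -> 0 <= d < 2 * PI ->
  sinc (INR M / 2 * d) ^ 2 / sinc (/ 2 * d) ^ 2 = fejer M d / INR M ^ 2.
Proof.
  intros HM Hd.
  assert (HMr : 1 <= INR M) by (apply (le_INR 1); auto).
  unfold sinc. destruct (Req_dec d 0) as [->|Hd0].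
  - rewrite !Rmult_0_r, fejer_0. destruct (Req_EM_T 0 0); [|easy]. field. lra.
  - destruct (Req_EM_T (INR M / 2 * d) 0) as [E|_]; [nra|].
    destruct (Req_EM_T (/ 2 * d) 0) as [E|_]; [lra|].
    assert (Hs : 0 < sin (d / 2)) by (apply sin_gt_0; lra).
    assert (Hfejer := sin_half_sq_mul_fejer M d).
    replace (fejer M d) with (sin (INR M * d / 2) ^ 2 / sin (d / 2) ^ 2)
      by (rewrite <- Hfejer; field; lra).
    replace (INR M / 2 * d) with (INR M * d / 2) by field.
    replace (/ 2 * d) with (d / 2) by field.
    field. repeat split; lra.
Qed.

Lemma qpe_density_fejer (M : nat) (phi v : R) : (1 <= M)%nat ->
  qpe_density M phi v = fejer M (phi - v) / (2 * PI * INR M).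
Proof.
  intro HM.
  assert (HMr : 1 <= INR M) by (apply (le_INR 1); auto).
  assert (HPI := PI_RGT_0).
  destruct (dist2pi_attained (phi - v)) as [l [Hd HdPI]].
  assert (Hd0 : 0 <= dist2pi (phi - v)) by (rewrite Hd; apply Rabs_pos).
  unfold qpe_density. rewrite sinc_ratio_sq_fejer by (auto; lra).
  rewrite Hd, fejer_abs_sub_2PI_mult. field. lra.
Qed.

Lemma Expect_ext (M : nat) (phi : R) (g1 g2 : R -> R) :
  (forall v, g1 v = g2 v) -> Expect M phi g1 = Expect M phi g2.
Proof. intro H. unfold Expect. apply RInt_ext. intros v _. rewrite H. reflexivity. Qed.

Lemma Expect_affine_cos (M j : nat) (phi a b psi : R) : (1 <= M)%nat ->
  Expect M phi (fun v => a + b * cos (INR j * v - psi)) =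
  a + b * (INR (M - j) / INR M) * cos (INR j * phi - psi).
Proof.
  intro HM.
  assert (HMr : 1 <= INR M) by (apply (le_INR 1); auto).
  assert (HPI := PI_RGT_0).
  assert (H := is_RInt_plus _ _ _ _ _ _
    (is_RInt_scal _ _ _ (a / (2 * PI * INR M)) _ (is_RInt_fejer_mul_cos phi 0 M 0))
    (is_RInt_scal _ _ _ (b / (2 * PI * INR M)) _ (is_RInt_fejer_mul_cos phi psi M j))).
  unfold plus, scal in H; simpl in H; unfold mult in H; simpl in H.
  rewrite Nat.sub_0_r, INR_0, Rmult_0_l, Rminus_0_r, cos_0 in H.
  unfold Expect. apply is_RInt_unique.
  apply (is_RInt_ext _ (fun v => qpe_density M phi v * (a + b * cos (INR j * v - psi)))) in H.
  - replace (a + b * (INR (M - j) / INR M) * cos (INR j * phi - psi)) with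
      (a / (2 * PI * INR M) * (INR M * (2 * PI * 1)) +
       b / (2 * PI * INR M) * (INR (M - j) * (2 * PI * cos (INR j * phi - psi))))
      by (field; lra).
    exact H.
  - intros v _. rewrite qpe_density_fejer by exact HM.
    simpl. rewrite Rmult_0_l, Rminus_0_r, cos_0. field. lra.
Qed.

Lemma Expect_first_harmonic (M : nat) (phi a b psi : R) : (1 <= M)%nat ->
  Expect M phi (fun v => a + b * cos (v - psi)) = a + b * (1 - / INR M) * cos (phi - psi).
Proof.
  intro HM.
  assert (HMr : 1 <= INR M) by (apply (le_INR 1); auto).
  rewrite (Expect_ext M phi _ (fun v => a + b * cos (INR 1 * v - psi)))
    by (intro v; rewrite INR_1, Rmult_1_l; reflexivity).
  rewrite Expect_affine_cos, minus_INR, INR_1, Rmult_1_l by (auto; lia).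
  field. lra.
Qed.

Lemma Expect_sin_sub_sq (M : nat) (phi : R) : (2 <= M)%nat ->
  Expect M phi (fun v => sin (v - phi) ^ 2) = / INR M.
Proof.
  intro HM.
  assert (HMr : 2 <= INR M) by (apply (le_INR 2); auto).
  rewrite (Expect_ext M phi _ (fun v => / 2 + - / 2 * cos (INR 2 * v - 2 * phi))).
  - rewrite Expect_affine_cos, minus_INR by lia. change (INR 2) with (1 + 1).
    replace ((1 + 1) * phi - 2 * phi) with 0 by ring.
    rewrite cos_0. field. lra.
  - intro v. change (INR 2) with (1 + 1). replace ((1 + 1) * v - 2 * phi) with (2 * (v - phi)) by ring.
    rewrite cos_2a_sin. field.
Qed.

Lemma cos_sub_PI2 (x : R) : cos (x - PI / 2) = sin x.
Proof. rewrite <- cos_neg, Ropp_minus_distr. apply cos_shift. Qed.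

Lemma CExpect_scal_cexpi (M : nat) (phi a : R) : (1 <= M)%nat ->
  CExpect M phi (fun v => Cmult (RtoC a) (cexpi v)) =
  Cmult (RtoC (a * (1 - / INR M))) (cexpi phi).
Proof.
  intro HM. unfold CExpect.
  rewrite (Expect_ext M phi _ (fun v => 0 + a * cos (v - 0)))
    by (intro v; simpl; rewrite Rminus_0_r; ring).
  rewrite (Expect_ext M phi (fun v => Im _) (fun v => 0 + a * cos (v - PI / 2)))
    by (intro v; simpl; rewrite cos_sub_PI2; ring).
  rewrite !Expect_first_harmonic, Rminus_0_r, cos_sub_PI2 by exact HM.
  unfold Cmult, RtoC, cexpi. apply injective_projections; simpl; ring.
Qed.

Lemma Cmod_scal_cexpi_sub_sq (a v phi : R) :
  Cmod (Cminus (Cmult (RtoC a) (cexpi v)) (cexpi phi)) ^ 2 = a ^ 2 + 1 - 2 * a * cos (v - phi).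
Proof.
  unfold Cmod, Cminus, Cmult, RtoC, cexpi; simpl.
  rewrite !Rmult_1_r, sqrt_sqrt by (apply Rplus_le_le_0_compat; apply Rle_0_sqr).
  rewrite cos_minus. assert (H1 := sin2_cos2 v). assert (H2 := sin2_cos2 phi). unfold Rsqr in *.
  unfold plus, opp; simpl. nra.
Qed.

Lemma CExpect_estimator (M : nat) (phi : R) : (2 <= M)%nat ->
  CExpect M phi (estimator M) = cexpi phi.
Proof.
  intro HM.
  assert (HMr : 2 <= INR M) by (apply (le_INR 2); auto).
  unfold estimator. rewrite CExpect_scal_cexpi by lia.
  replace ((1 + / (INR M - 1)) * (1 - / INR M)) with 1 by (field; lra).
  unfold Cmult, RtoC, cexpi. apply injective_projections; simpl; ring.
Qed.

Lemma CVariance_estimator (M : nat) (phi : R) : (2 <= M)%nat ->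
  CVariance M phi (estimator M) = (1 + / (INR M - 1)) ^ 2 - 1.
Proof.
  intro HM.
  assert (HMr : 2 <= INR M) by (apply (le_INR 2); auto).
  unfold CVariance. rewrite CExpect_estimator by exact HM. unfold estimator.
  set (a := 1 + / (INR M - 1)).
  rewrite (Expect_ext M phi _ (fun v => (a ^ 2 + 1) + - (2 * a) * cos (v - phi)))
    by (intro v; rewrite Cmod_scal_cexpi_sub_sq; ring).
  rewrite Expect_first_harmonic by lia. rewrite Rminus_diag, cos_0.
  unfold a. field. lra.
Qed.

(* [(1 + 1/(m-1))^2 - 1 = (2m - 1)/(m - 1)^2]; the upper bound is tight at [m = 2]. *)
Lemma estimator_variance_bounds (m : R) : 2 <= m ->
  1 / m <= (1 + / (m - 1)) ^ 2 - 1 <= 6 / m.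
Proof.
  intro Hm.
  assert (Hpos : 0 < / (m * (m - 1) ^ 2)) by (apply Rinv_0_lt_compat; nra).
  replace ((1 + / (m - 1)) ^ 2 - 1 - 1 / m) with ((m ^ 2 + m - 1) * / (m * (m - 1) ^ 2))
    by (field; lra).
  split.
  - assert (0 <= (m ^ 2 + m - 1) * / (m * (m - 1) ^ 2)) by (apply Rmult_le_pos; nra).
    replace ((1 + / (m - 1)) ^ 2 - 1) with
      (1 / m + (m ^ 2 + m - 1) * / (m * (m - 1) ^ 2)) by (field; lra).
    lra.
  - assert (0 <= (m - 2) * (4 * m - 3) * / (m * (m - 1) ^ 2)) by (apply Rmult_le_pos; nra).
    replace ((1 + / (m - 1)) ^ 2 - 1) with
      (6 / m - (m - 2) * (4 * m - 3) * / (m * (m - 1) ^ 2)) by (field; lra).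
    lra.
Qed.

Theorem mainTheorem9 :
  (forall (M : nat) (phi : R), (2 <= M)%nat ->
     CExpect M phi cexpi = Cmult (RtoC (1 - / INR M)) (cexpi phi) /\
     Expect M phi (fun v => (sin (v - phi)) ^ 2) = / INR M /\
     CExpect M phi (estimator M) = cexpi phi) /\
  (exists c1 c2 : R, 0 < c1 /\ 0 < c2 /\
     forall (M : nat) (phi : R), (2 <= M)%nat ->
       c1 / INR M <= CVariance M phi (estimator M) <= c2 / INR M).
Proof.
  split.
  - intros M phi HM. split; [|split].
    + rewrite <- (Rmult_1_l (1 - / INR M)), <- CExpect_scal_cexpi by lia.
      unfold CExpect. f_equal; apply Expect_ext; intro v; simpl; ring.
    + exact (Expect_sin_sub_sq M phi HM).
    + exact (CExpect_estimator M phi HM).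
  - exists 1, 6. do 2 (split; [lra|]). intros M phi HM.
    rewrite CVariance_estimator by exact HM.
    apply estimator_variance_bounds, (le_INR 2); exact HM.
Qed.
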